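(* Let $\mathbb{E}$ be a Boolean algebra, let $P:\mathbb{E}\to\mathbb{R}$ be a probability function, let $e_1,\dots,e_n\in\mathbb{E}$ be pairwise disjoint ($e_i\wedge e_j=\bot$ for $i\neq j$), let $y_1,\dots,y_n\in\mathbb{R}$, and let $X$ be the conditional value $X=\sum_{i=1}^n e_i\!:\to v(y_i)$. Let $F:\mathbb{R}\to\mathbb{R}$ be the function $F(x)=P(X=x)=\sum_{i=1}^n 0_{y_i-x}\cdot P(e_i)$. Then (1) $E_P(X)=E_{\mathit{pmf}}(F)$, and (2) $\mathit{VAR}_P(X)=\mathit{VAR}_{\mathit{pmf}}(F)$.
   Context: Work in the meadow of reals $\mathbb{R}_0$ (the reals with total inverse, $0^{-1}=0$). For a real $x$, $0_x=1-x\cdot x^{-1}$, so $0_x=1$ if $x=0$ and $0_x=0$ otherwise. A probability function on a Boolean algebra $(E,\vee,\wedge,\neg,\top,\bot)$ is a map $P:E\to\mathbb{R}$ with $P(\top)=1$, $P(\bot)=0$, $P(x)\ge 0$ and $P(x\vee y)=P(x)+P(y)-P(x\wedge y)$. Conditional values (CVs) are formal sums of terms $e\!:\to v(y)$ ($e$ an event, $y$ a real), combined with the meadow operations, where $e\!:\to Z$ denotes ''$Z$ if event $e$ occurs, $0$ otherwise''; in particular, for pairwise disjoint $e_i$, $X^2=X\cdot X=\sum_{i=1}^n e_i\!:\to v(y_i^2)$. The expectation value of a CV is determined by $E_P(Z_1+Z_2)=E_P(Z_1)+E_P(Z_2)$ and $E_P(e\!:\to v(x))=P(e)\cdot x$,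 so $E_P(X)=\sum_i P(e_i)y_i$; $\mathit{VAR}_P(X)=E_P(X^2)-(E_P(X))^2$. Finite support summation: for a function $g:\mathbb{R}\to\mathbb{R}$, $\sum^\star_x g(x)$ is the sum of the nonzero values of $g$ if $g$ is nonzero at only finitely many arguments, and $0$ otherwise. For $F:\mathbb{R}\to\mathbb{R}$: $E_{\mathit{pmf}}(F)=\sum^\star_x (x\cdot F(x))$ and $\mathit{VAR}_{\mathit{pmf}}(F)=\sum^\star_x(x^2\cdot F(x))-E_{\mathit{pmf}}(F)^2$. *)

From HB Require Import structures.
From mathcomp Require Import all_boot all_order all_algebra.
From mathcomp Require Import boolp reals.
Set Implicit Arguments. Unset Strict Implicit. Unset Printing Implicit Defensive.
Import Order.TTheory GRing.Theory Num.Theory.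
Local Open Scope ring_scope.
Local Open Scope order_scope.

(* A Boolean algebra is a complemented distributive lattice with top and
   bottom: [E : ctbDistrLatticeType d], with join `|`, meet `&`, complement ~`,
   top \top, bottom \bot. *)

Definition is_probability_function {R : realType} {d} {E : ctbDistrLatticeType d}
    (P : E -> R) : Prop :=
  [/\ P \top = 1, P \bot = 0, (forall x, 0 <= P x)%R &
      (forall x y, P (x `|` y) = P x + P y - P (x `&` y))%R].

(* 0_x = 1 - x * x^-1 in the meadow (x^-1 is total with 0^-1 = 0). *)
Definition zero_of {R : realType} (x : R) : R := (1 - x * x^-1)%R.

(* A conditional value given as a formal sum of terms  e :-> v(y),
   represented by the list of its terms (event, value). *)
Definition CV {d} (E : ctbDistrLatticeType d) (R : realType) := seq (E * R).

Definition cv_of {R : realType} {d} {E : ctbDistrLatticeType d} (n : nat)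
    (e : 'I_n -> E) (y : 'I_n -> R) : CV E R :=
  [seq (e i, y i) | i <- enum 'I_n].

(* Expectation: additive, and E_P(e :-> v(x)) = P(e) * x. *)
Definition EP {R : realType} {d} {E : ctbDistrLatticeType d} (P : E -> R)
    (X : CV E R) : R :=
  (\sum_(t <- X) P t.1 * t.2)%R.

(* For pairwise disjoint e_i, X^2 = sum_i e_i :-> v(y_i^2). *)
Definition cv_sq_disj {R : realType} {d} {E : ctbDistrLatticeType d}
    (X : CV E R) : CV E R :=
  [seq (t.1, t.2 ^+ 2)%R | t <- X].

Definition VARP {R : realType} {d} {E : ctbDistrLatticeType d} (P : E -> R)
    (X : CV E R) : R :=
  (EP P (cv_sq_disj X) - (EP P X) ^+ 2)%R.

Definition fin_support {R : realType} (g : R -> R) : Prop :=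
  exists s : seq R, forall x, g x != 0%R -> x \in s.

Definition sum_star {R : realType} (g : R -> R) : R :=
  match pselect (fin_support g) with
  | left H => (\sum_(x <- undup (projT1 (cid H)) | g x != 0%R) g x)%R
  | right _ => 0%R
  end.

Definition E_pmf {R : realType} (F : R -> R) : R := sum_star (fun x => x * F x)%R.

Definition VAR_pmf {R : realType} (F : R -> R) : R :=
  (sum_star (fun x => x ^+ 2 * F x) - (E_pmf F) ^+ 2)%R.

(** F vanishes off the finite set {y_1, ..., y_n}, so both [sum_star]s are
   ordinary sums over the distinct values y_i.  Exchanging the order of
   summation and using that [zero_of (y_i - x)] is the indicator of [x = y_i],
   [sum*_x h(x) F(x)] collapses to [sum_i P(e_i) h(y_i)], which for [h x = x]
   and [h x = x^2] are the two moments appearing in [EP] and [VARP]. *)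

From HB Require Import structures.
From mathcomp Require Import all_boot all_order all_algebra.
From mathcomp Require Import boolp reals.
Import Order.TTheory GRing.Theory Num.Theory.
Local Open Scope ring_scope.

Section FiniteSupportSum.
Variable R : realType.

Lemma zero_ofE (x : R) : zero_of x = if x == 0 then 1 else 0.
Proof.
rewrite /zero_of; case: eqP => [->|/eqP x_neq0]; first by rewrite mul0r subr0.
by rewrite mulfV // subrr.
Qed.

Lemma big_zero_of_sub (s : seq R) (a : R) (f : R -> R) :
  uniq s -> a \in s -> \sum_(x <- s) zero_of (a - x) * f x = f a.
Proof.
move=> s_uniq a_in_s.
rewrite (bigD1_seq a) //= subrr zero_ofE eqxx mul1r big1 ?addr0 // => x.
by rewrite zero_ofE subr_eq0 eq_sym => /negbTE ->; rewrite mul0r.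
Qed.

Lemma eq_big_support_uniq (g : R -> R) (s t : seq R) :
  uniq s -> uniq t ->
  (forall x, g x != 0 -> x \in s) -> (forall x, g x != 0 -> x \in t) ->
  \sum_(x <- s | g x != 0) g x = \sum_(x <- t | g x != 0) g x.
Proof.
move=> s_uniq t_uniq supp_s supp_t; rewrite -[LHS]big_filter -[RHS]big_filter.
apply: perm_big; apply: uniq_perm; rewrite ?filter_uniq // => x.
rewrite !mem_filter; apply/andP/andP => -[gx_neq0 _]; split=> //.
- exact: supp_t.
- exact: supp_s.
Qed.

Lemma sum_starE (g : R -> R) (s : seq R) :
  (forall x, g x != 0 -> x \in s) -> sum_star g = \sum_(x <- undup s) g x.
Proof.
move=> supp_s; rewrite /sum_star; case: pselect => [fin_g|[]]; last by exists s.
case: (cid fin_g) => s' supp_s' /=.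
rewrite -(@big_rmcond _ _ _ _ _ (fun x => g x != 0)) => [|x /negPn/eqP //].
by apply: eq_big_support_uniq; rewrite ?undup_uniq // => x; rewrite mem_undup;
  [exact: supp_s' | exact: supp_s].
Qed.

Lemma sum_star_pmf (I : finType) (y p : I -> R) (h : R -> R) :
  sum_star (fun x => h x * \sum_i zero_of (y i - x) * p i) =
  \sum_i p i * h (y i).
Proof.
rewrite (@sum_starE _ (codom y)); last first.
  move=> x; apply: contraR => x_notin_y; rewrite big1 ?mulr0 // => i _.
  rewrite zero_ofE subr_eq0 ifN ?mul0r //.
  by apply: contraNneq x_notin_y => <-; exact: codom_f.
under eq_bigr do rewrite mulr_sumr.
rewrite exchange_big /=; apply: eq_bigr => i _.
under eq_bigr => x _ do rewrite mulrCA (mulrC (h x)).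
by rewrite big_zero_of_sub ?undup_uniq ?mem_undup ?codom_f.
Qed.

End FiniteSupportSum.

Section ConditionalValues.
Variables (R : realType) (d : Order.disp_t) (E : ctbDistrLatticeType d).

Lemma EP_cv_of (P : E -> R) (n : nat) (e : 'I_n -> E) (y : 'I_n -> R) :
  EP P (cv_of e y) = \sum_i P (e i) * y i.
Proof. by rewrite /EP /cv_of big_map big_enum. Qed.

Lemma cv_sq_disj_cv_of (n : nat) (e : 'I_n -> E) (y : 'I_n -> R) :
  cv_sq_disj (cv_of e y) = cv_of e (fun i => y i ^+ 2).
Proof. by rewrite /cv_sq_disj /cv_of -map_comp. Qed.

End ConditionalValues.

Theorem mainTheorem3 (R : realType) (d : Order.disp_t) (E : ctbDistrLatticeType d)
  (P : E -> R) (n : nat) (e : 'I_n -> E) (y : 'I_n -> R) :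
  is_probability_function P ->
  (forall i j : 'I_n, i != j -> (e i `&` e j)%O = \bot%O) ->
  let X := cv_of e y in
  let F := fun x : R => \sum_(i < n) zero_of (y i - x) * P (e i) in
  EP P X = E_pmf F /\ VARP P X = VAR_pmf F.
Proof.
move=> _ _ X F.
have EP_X : EP P X = E_pmf F by rewrite /E_pmf /F sum_star_pmf EP_cv_of.
split=> //.
by rewrite /VARP /VAR_pmf -EP_X /F sum_star_pmf /X cv_sq_disj_cv_of EP_cv_of.
Qed.
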